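(* Let $W^\pm=(\alpha_1^\pm,\rho_1^\pm,\rho_2^\pm,u_1^\pm,u_2^\pm)$ with $\alpha_1^\pm\in(0,1)$, $\rho_i^\pm>0$, and $S\in\mathbb{R}$ satisfy the Rankine–Hugoniot conditions \begin{align*} &[\![\alpha_1\rho u]\!]=S[\![\alpha_1\rho]\!],\quad [\![\alpha_1\rho_1u_1]\!]=S[\![\alpha_1\rho_1]\!],\quad [\![\rho u]\!]=S[\![\rho]\!],\\ &[\![\alpha_1\rho_1u_1^2+\alpha_2\rho_2u_2^2+\alpha_1p_1+\alpha_2p_2]\!]=S[\![\alpha_1\rho_1u_1+\alpha_2\rho_2u_2]\!],\quad [\![\tfrac12(u_1^2-u_2^2)+\Psi_1-\Psi_2]\!]=S[\![u_1-u_2]\!]. \end{align*} Define the energy dissipation across the discontinuity \[ D=\sum_{i=1}^2\Big(-S\,[\![\alpha_i\rho_i(\varphi_i+\tfrac12u_i^2)]\!]+[\![\alpha_i\rho_iu_i(\Psi_i+\tfrac12u_i^2)]\!]\Big). \] Then the quantities $\alpha_iQ_i$ ($i=1,2$) and $Q$ take the same value on both sides, $[\![\Psi_1+\tfrac12(u_1-S)^2]\!]=[\![\Psi_2+\tfrac12(u_2-S)^2]\!]$, and \[ D=-\sum_{i=1}^2\alpha_iQ_i\,[\![\Psi_i+\tfrac12(u_i-S)^2]\!]=-Q\,[\![\Psi_1+\tfrac12(u_1-S)^2]\!]=-Q\,[\![\Psi_2+\tfrac12(u_2-S)^2]\!]. \] In particular the entropy (energy) admissibility condition $D\le0$ is equivalent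 to $Q\,[\![\Psi_1+\tfrac12(u_1-S)^2]\!]\ge0$.
   Context: For $i=1,2$, $p_i:(0,\infty)\to\mathbb{R}$ is smooth with $p_i'>0$; $\varphi_i$ is an antiderivative of $\rho\mapsto p_i(\rho)/\rho^2$ (the specific internal energy in the isentropic case, the specific free energy $e_i-Ts_i$ in the isothermal case) and $\Psi_i(\rho)=\varphi_i(\rho)+p_i(\rho)/\rho$ (enthalpy, resp. Gibbs energy). For a state: $\alpha_2=1-\alpha_1$, $\rho=\alpha_1\rho_1+\alpha_2\rho_2$, $c_i=\alpha_i\rho_i/\rho$, $u=c_1u_1+c_2u_2$, $p_i=p_i(\rho_i)$, $\varphi_i=\varphi_i(\rho_i)$, $\Psi_i=\Psi_i(\rho_i)$. Mass fluxes: $Q=-\rho(u-S)$, $Q_i=-\rho_i(u_i-S)$. $[\![f]\!]=f(W^+)-f(W^-)$. The admissibility (mathematical entropy) condition for the system is that the total energy $\sum_i\alpha_i\rho_i(\varphi_i+u_i^2/2)$ with flux $\sum_i\alpha_i\rho_iu_i(\Psi_i+u_i^2/2)$ is dissipated, i.e. $D\le 0$ across discontinuities. *)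

From Stdlib Require Import Reals.
From Coquelicot Require Import Coquelicot.
Open Scope R_scope.

(* A state W = (alpha_1, rho_1, rho_2, u_1, u_2). *)
Record state := mkState { al1 : R; rh1 : R; rh2 : R; ve1 : R; ve2 : R }.

Definition al2 (W : state) : R := 1 - al1 W.
Definition rho (W : state) : R := al1 W * rh1 W + al2 W * rh2 W.
Definition c1 (W : state) : R := al1 W * rh1 W / rho W.
Definition c2 (W : state) : R := al2 W * rh2 W / rho W.
Definition vel (W : state) : R := c1 W * ve1 W + c2 W * ve2 W.

Definition Psi (p phi : R -> R) (x : R) : R := phi x + p x / x.

Definition Qm (S : R) (W : state) : R := - rho W * (vel W - S).
Definition Q1 (S : R) (W : state) : R := - rh1 W * (ve1 W - S).
Definition Q2 (S : R) (W : state) : R := - rh2 W * (ve2 W - S).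

Definition jump (f : state -> R) (Wp Wm : state) : R := f Wp - f Wm.

Definition admissible_state (W : state) : Prop :=
  0 < al1 W < 1 /\ 0 < rh1 W /\ 0 < rh2 W.

Definition Ddiss (p1 p2 phi1 phi2 : R -> R) (S : R) (Wp Wm : state) : R :=
  (- S * jump (fun W => al1 W * rh1 W * (phi1 (rh1 W) + ve1 W ^ 2 / 2)) Wp Wm
   + jump (fun W => al1 W * rh1 W * ve1 W * (Psi p1 phi1 (rh1 W) + ve1 W ^ 2 / 2)) Wp Wm)
  + (- S * jump (fun W => al2 W * rh2 W * (phi2 (rh2 W) + ve2 W ^ 2 / 2)) Wp Wm
   + jump (fun W => al2 W * rh2 W * ve2 W * (Psi p2 phi2 (rh2 W) + ve2 W ^ 2 / 2)) Wp Wm).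

Definition G1 (p1 phi1 : R -> R) (S : R) (W : state) : R :=
  Psi p1 phi1 (rh1 W) + (ve1 W - S) ^ 2 / 2.
Definition G2 (p2 phi2 : R -> R) (S : R) (W : state) : R :=
  Psi p2 phi2 (rh2 W) + (ve2 W - S) ^ 2 / 2.

Definition pressure_law (p phi : R -> R) : Prop :=
  (forall n x, 0 < x -> ex_derive_n p n x) /\
  (forall x, 0 < x -> 0 < Derive p x) /\
  (forall x, 0 < x -> is_derive phi x (p x / x ^ 2)).

(* In each phase the energy flux relative to the shock, -S m_i (phi_i + u_i^2/2)
   + m_i u_i (Psi_i + u_i^2/2) with m_i = alpha_i rho_i, equals -alpha_i Q_i G_i
   with G_i = Psi_i + (u_i - S)^2/2, up to S times the momentum flux and S^2 times
   the mass flux.  Across a discontinuity satisfying the Rankine-Hugoniot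
   conditions the phase mass fluxes alpha_i Q_i and the momentum balance make
   those extra terms vanish, the fluxes alpha_i Q_i factor out of the jumps, and
   the interfacial condition gives [G_1] = [G_2]; summing the two phases yields
   D = -Q [G_1]. *)
From Pilot Require Import Defs.
From Stdlib Require Import Reals Lra.
From Coquelicot Require Import Coquelicot.
Open Scope R_scope.

Lemma rho_gt0 (W : state) : admissible_state W -> 0 < rho W.
Proof. intros [[a_gt0 a_lt1] [r1_gt0 r2_gt0]]; unfold rho, al2; nra. Qed.

Lemma rho_vel (W : state) : rho W <> 0 ->
  rho W * vel W = al1 W * rh1 W * ve1 W + al2 W * rh2 W * ve2 W.
Proof. intros rho_neq0; unfold vel, Defs.c1, c2; field; exact rho_neq0. Qed.

Lemma Qm_rho_vel (S : R) (W : state) : Qm S W = S * rho W - rho W * vel W.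
Proof. unfold Qm; ring. Qed.

Lemma Qm_split (S : R) (W : state) : rho W <> 0 ->
  Qm S W = al1 W * Q1 S W + al2 W * Q2 S W.
Proof.
  intros rho_neq0; rewrite Qm_rho_vel, rho_vel by exact rho_neq0.
  unfold Q1, Q2, rho; ring.
Qed.

Lemma jump_mul_left (f g : state -> R) (Wp Wm : state) : f Wp = f Wm ->
  jump (fun W => f W * g W) Wp Wm = f Wm * jump g Wp Wm.
Proof. intros f_eq; unfold jump; rewrite f_eq; ring. Qed.

Lemma phase_energy_flux (a r u P F S : R) : r <> 0 ->
  - S * (a * r * (F + u ^ 2 / 2)) + a * r * u * (F + P / r + u ^ 2 / 2)
  = - (a * (- r * (u - S)) * (F + P / r + (u - S) ^ 2 / 2))
    + S * (a * r * u ^ 2 + a * P - S * (a * r * u))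
    + S ^ 2 / 2 * (a * (- r * (u - S))).
Proof. intros r_neq0; field; exact r_neq0. Qed.

Lemma Ddiss_balance (p1 p2 phi1 phi2 : R -> R) (S : R) (Wp Wm : state) :
  rh1 Wp <> 0 -> rh2 Wp <> 0 -> rh1 Wm <> 0 -> rh2 Wm <> 0 ->
  Ddiss p1 p2 phi1 phi2 S Wp Wm
  = - (jump (fun W => al1 W * Q1 S W * G1 p1 phi1 S W) Wp Wm
       + jump (fun W => al2 W * Q2 S W * G2 p2 phi2 S W) Wp Wm)
    + S * (jump (fun W => al1 W * rh1 W * ve1 W ^ 2 + al2 W * rh2 W * ve2 W ^ 2
                          + al1 W * p1 (rh1 W) + al2 W * p2 (rh2 W)) Wp Wm
           - S * jump (fun W => al1 W * rh1 W * ve1 W + al2 W * rh2 W * ve2 W) Wp Wm)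
    + S ^ 2 / 2 * jump (fun W => al1 W * Q1 S W + al2 W * Q2 S W) Wp Wm.
Proof.
  intros r1p r2p r1m r2m.
  unfold Ddiss, jump, G1, G2, Q1, Q2, Psi.
  pose proof (phase_energy_flux (al1 Wp) (rh1 Wp) (ve1 Wp) (p1 (rh1 Wp)) (phi1 (rh1 Wp)) S r1p).
  pose proof (phase_energy_flux (al2 Wp) (rh2 Wp) (ve2 Wp) (p2 (rh2 Wp)) (phi2 (rh2 Wp)) S r2p).
  pose proof (phase_energy_flux (al1 Wm) (rh1 Wm) (ve1 Wm) (p1 (rh1 Wm)) (phi1 (rh1 Wm)) S r1m).
  pose proof (phase_energy_flux (al2 Wm) (rh2 Wm) (ve2 Wm) (p2 (rh2 Wm)) (phi2 (rh2 Wm)) S r2m).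
  lra.
Qed.

Lemma phase1_flux_conserved (S : R) (Wp Wm : state) :
  jump (fun W => al1 W * rh1 W * ve1 W) Wp Wm = S * jump (fun W => al1 W * rh1 W) Wp Wm ->
  al1 Wp * Q1 S Wp = al1 Wm * Q1 S Wm.
Proof. unfold jump, Q1; lra. Qed.

Lemma Qm_conserved (S : R) (Wp Wm : state) :
  jump (fun W => rho W * vel W) Wp Wm = S * jump rho Wp Wm -> Qm S Wp = Qm S Wm.
Proof. unfold jump; rewrite !Qm_rho_vel; lra. Qed.

Lemma jump_G1_G2 (p1 p2 phi1 phi2 : R -> R) (S : R) (Wp Wm : state) :
  jump (fun W => (ve1 W ^ 2 - ve2 W ^ 2) / 2 + Psi p1 phi1 (rh1 W) - Psi p2 phi2 (rh2 W)) Wp Wm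
    = S * jump (fun W => ve1 W - ve2 W) Wp Wm ->
  jump (G1 p1 phi1 S) Wp Wm = jump (G2 p2 phi2 S) Wp Wm.
Proof. unfold jump, G1, G2; lra. Qed.

Lemma Ddiss_of_conserved_fluxes (p1 p2 phi1 phi2 : R -> R) (S : R) (Wp Wm : state) :
  rh1 Wp <> 0 -> rh2 Wp <> 0 -> rh1 Wm <> 0 -> rh2 Wm <> 0 ->
  al1 Wp * Q1 S Wp = al1 Wm * Q1 S Wm ->
  al2 Wp * Q2 S Wp = al2 Wm * Q2 S Wm ->
  jump (fun W => al1 W * rh1 W * ve1 W ^ 2 + al2 W * rh2 W * ve2 W ^ 2
                 + al1 W * p1 (rh1 W) + al2 W * p2 (rh2 W)) Wp Wm
    = S * jump (fun W => al1 W * rh1 W * ve1 W + al2 W * rh2 W * ve2 W) Wp Wm ->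
  Ddiss p1 p2 phi1 phi2 S Wp Wm
    = - (al1 Wm * Q1 S Wm * jump (G1 p1 phi1 S) Wp Wm
         + al2 Wm * Q2 S Wm * jump (G2 p2 phi2 S) Wp Wm).
Proof.
  intros r1p r2p r1m r2m E1 E2 RH_mom.
  rewrite Ddiss_balance, RH_mom by assumption.
  rewrite (jump_mul_left (fun W => al1 W * Q1 S W)) by exact E1.
  rewrite (jump_mul_left (fun W => al2 W * Q2 S W)) by exact E2.
  replace (jump (fun W => al1 W * Q1 S W + al2 W * Q2 S W) Wp Wm) with 0
    by (unfold jump; lra).
  ring.
Qed.

Theorem mainTheorem3 (p1 p2 phi1 phi2 : R -> R) (Wp Wm : state) (S : R) :
  pressure_law p1 phi1 -> pressure_law p2 phi2 ->
  admissible_state Wp -> admissible_state Wm ->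
  (* Rankine--Hugoniot conditions *)
  jump (fun W => al1 W * rho W * vel W) Wp Wm = S * jump (fun W => al1 W * rho W) Wp Wm ->
  jump (fun W => al1 W * rh1 W * ve1 W) Wp Wm = S * jump (fun W => al1 W * rh1 W) Wp Wm ->
  jump (fun W => rho W * vel W) Wp Wm = S * jump rho Wp Wm ->
  jump (fun W => al1 W * rh1 W * ve1 W ^ 2 + al2 W * rh2 W * ve2 W ^ 2
                 + al1 W * p1 (rh1 W) + al2 W * p2 (rh2 W)) Wp Wm
    = S * jump (fun W => al1 W * rh1 W * ve1 W + al2 W * rh2 W * ve2 W) Wp Wm ->
  jump (fun W => (ve1 W ^ 2 - ve2 W ^ 2) / 2 + Psi p1 phi1 (rh1 W) - Psi p2 phi2 (rh2 W)) Wp Wm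
    = S * jump (fun W => ve1 W - ve2 W) Wp Wm ->
  (* conclusions *)
  al1 Wp * Q1 S Wp = al1 Wm * Q1 S Wm /\
  al2 Wp * Q2 S Wp = al2 Wm * Q2 S Wm /\
  Qm S Wp = Qm S Wm /\
  jump (G1 p1 phi1 S) Wp Wm = jump (G2 p2 phi2 S) Wp Wm /\
  Ddiss p1 p2 phi1 phi2 S Wp Wm
    = - (al1 Wm * Q1 S Wm * jump (G1 p1 phi1 S) Wp Wm
         + al2 Wm * Q2 S Wm * jump (G2 p2 phi2 S) Wp Wm) /\
  Ddiss p1 p2 phi1 phi2 S Wp Wm = - (Qm S Wm * jump (G1 p1 phi1 S) Wp Wm) /\
  Ddiss p1 p2 phi1 phi2 S Wp Wm = - (Qm S Wm * jump (G2 p2 phi2 S) Wp Wm) /\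
  (Ddiss p1 p2 phi1 phi2 S Wp Wm <= 0 <-> 0 <= Qm S Wm * jump (G1 p1 phi1 S) Wp Wm).
Proof.
  intros _ _ Ap Am _ RH_mass1 RH_mass RH_mom RH_rel.
  pose proof (phase1_flux_conserved S Wp Wm RH_mass1) as E1.
  pose proof (Qm_conserved S Wp Wm RH_mass) as EQ.
  pose proof (Qm_split S Wp (Rgt_not_eq _ _ (rho_gt0 Wp Ap))) as split_p.
  pose proof (Qm_split S Wm (Rgt_not_eq _ _ (rho_gt0 Wm Am))) as split_m.
  assert (E2 : al2 Wp * Q2 S Wp = al2 Wm * Q2 S Wm) by lra.
  destruct Ap as [_ [r1p r2p]], Am as [_ [r1m r2m]].
  pose proof (jump_G1_G2 p1 p2 phi1 phi2 S Wp Wm RH_rel) as EG.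
  pose proof (Ddiss_of_conserved_fluxes p1 p2 phi1 phi2 S Wp Wm
                ltac:(lra) ltac:(lra) ltac:(lra) ltac:(lra) E1 E2 RH_mom) as ED.
  assert (ED1 : Ddiss p1 p2 phi1 phi2 S Wp Wm = - (Qm S Wm * jump (G1 p1 phi1 S) Wp Wm))
    by (rewrite ED, split_m, <- EG; ring).
  repeat split; try assumption.
  - rewrite ED1, EG; reflexivity.
  - lra.
  - lra.
Qed.
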